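(* Let $m$ and $n$ be positive integers. Then $$\frac{1-q}{1-q^{m+n}}{m+n-2\brack m-1}_q{n\brack m}_q{2n\brack n}_q$$ is a polynomial in $q$ with non-negative integer coefficients.
   Context: The $q$-binomial coefficients are defined by ${n\brack k}_q=\prod_{i=1}^{k}\frac{1-q^{n-k+i}}{1-q^i}$ if $0\le k\le n$, and ${n\brack k}_q=0$ otherwise. *)

(* q-binomials as rational functions in q, i.e. elements of
   the field of fractions of Z[q], defined literally as the product in the paper. *)
From HB Require Import structures.
From mathcomp Require Import all_boot all_order all_algebra.
Set Implicit Arguments. Unset Strict Implicit. Unset Printing Implicit Defensive.
Import GRing.Theory.
Local Open Scope ring_scope.

Notation "x %:F" := (@FracField.tofrac _ x) : ring_scope.
Definition qvar : {fraction {poly int}} := ('X : {poly int})%:F.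

Definition qbin (n k : nat) : {fraction {poly int}} :=
  if (k <= n)%N then
    \prod_(i < k) ((1 - qvar ^+ (n - k + i.+1)%N) / (1 - qvar ^+ i.+1))
  else 0.

From HB Require Import structures.
From mathcomp Require Import all_boot all_order all_algebra.
From mathcomp Require Import ring zify.
Import GRing.Theory Num.Theory.
Local Open Scope ring_scope.

(* Write m = c + 1, n = r + 1 and g_i = [n + i, i]_q. A computation with q-factorials shows that
   q^c times the quantity equals D * [2n, n - m]_q, where D = g_c^2 - g_(c+1) g_(c-1) is a 2x2
   minor of the sequence (g_i). Every minor g_c g_j - g_(c+1) g_(j-1) with j <= c of such a row
   lies in q^j N[q]: the q-Pascal rule expresses these minors, together with the mixed minors
   between consecutive rows, through one another with coefficients 1 and q^(r+1), so induction
   on the row index proves it. Hence (D / q^c) [2n, n - m]_q is the required polynomial. *)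

Definition coef_nonneg (p : {poly int}) := forall i : nat, 0 <= p`_i.

Lemma coef_nonneg1 : coef_nonneg 1.
Proof. by move=> i; rewrite coef1; case: (i == 0)%N. Qed.

Lemma coef_nonnegXn k : coef_nonneg 'X^k.
Proof. by move=> i; rewrite coefXn; case: (i == k). Qed.

Lemma coef_nonnegD p q : coef_nonneg p -> coef_nonneg q -> coef_nonneg (p + q).
Proof. by move=> hp hq i; rewrite coefD addr_ge0. Qed.

Lemma coef_nonnegM p q : coef_nonneg p -> coef_nonneg q -> coef_nonneg (p * q).
Proof. by move=> hp hq i; rewrite coefM; apply: sumr_ge0 => j _; rewrite mulr_ge0. Qed.

Definition Xn_nonneg (j : nat) (p : {poly int}) := exists2 s, coef_nonneg s & p = 'X^j * s.

Lemma Xn_nonneg0 p : coef_nonneg p -> Xn_nonneg 0 p.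
Proof. by exists p; rewrite // expr0 mul1r. Qed.

Lemma Xn_nonnegD j p q : Xn_nonneg j p -> Xn_nonneg j q -> Xn_nonneg j (p + q).
Proof.
by move=> [s s_ge0 ->] [t t_ge0 ->]; exists (s + t); [exact: coef_nonnegD | rewrite mulrDr].
Qed.

Lemma Xn_nonnegMXn i j k p :
  (i <= k + j)%N -> Xn_nonneg j p -> Xn_nonneg i ('X^k * p).
Proof.
move=> le_i [s s_ge0 ->]; exists ('X^(k + j - i) * s).
  exact: coef_nonnegM (coef_nonnegXn _) s_ge0.
by rewrite !mulrA -!exprD subnKC.
Qed.

(* [gauss r k] is the Gaussian binomial [r + k, k]_q, built by the q-Pascal rule. *)
Fixpoint gauss (r : nat) : nat -> {poly int} :=
  match r with
  | 0 => fun _ => 1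
  | r'.+1 => fix gauss_r k : {poly int} :=
      if k is k'.+1 then gauss r' k + 'X^r * gauss_r k' else 1
  end.

Lemma gauss0k k : gauss 0 k = 1. Proof. by []. Qed.
Lemma gauss_r0 r : gauss r 0 = 1. Proof. by case: r. Qed.
Lemma gaussSS r k : gauss r.+1 k.+1 = gauss r k.+1 + 'X^(r.+1) * gauss r.+1 k.
Proof. by []. Qed.

Lemma gauss_nonneg r k : coef_nonneg (gauss r k).
Proof.
elim: r k => [|r IHr] k; first exact: coef_nonneg1.
elim: k => [|k IHk]; first exact: coef_nonneg1.
by rewrite gaussSS; apply/coef_nonnegD/coef_nonnegM/IHk/coef_nonnegXn.
Qed.

Definition gauss_det (r c j : nat) : {poly int} :=
  gauss r c * gauss r j - (if j is j'.+1 then gauss r c.+1 * gauss r j' else 0).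

Definition gauss_mixed_det (r c j : nat) : {poly int} :=
  gauss r c * gauss r.+1 j - (if j is j'.+1 then gauss r c.+1 * gauss r.+1 j' else 0).

Lemma gauss_mixed_detS r c j :
  gauss_mixed_det r c j.+1 = gauss_det r c j.+1 + 'X^(r.+1) * gauss_mixed_det r c j.
Proof.
by rewrite /gauss_mixed_det /gauss_det; case: j => [|j]; rewrite !gaussSS ?gauss_r0; ring.
Qed.

Lemma gauss_detSS r c j :
  gauss_det r.+1 c.+1 j = gauss_mixed_det r c.+1 j + 'X^(r.+1) * gauss_det r.+1 c j.
Proof.
rewrite /gauss_mixed_det /gauss_det; case: j => [|j]; rewrite ?gauss_r0.
  by rewrite gaussSS; ring.
by rewrite (gaussSS r c.+1) (gaussSS r c); ring.
Qed.

Lemma gauss_det_succ r j : gauss_det r j j.+1 = 0.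
Proof. by rewrite /gauss_det mulrC subrr. Qed.

Section DetStep.

Variable r : nat.
Hypothesis det_pos : forall c j, (j <= c)%N -> Xn_nonneg j (gauss_det r c j).

Lemma gauss_mixed_det_pos c j : (j <= c)%N -> Xn_nonneg j (gauss_mixed_det r c j).
Proof.
elim: j => [|j IHj] le_jc.
  by apply: Xn_nonneg0; rewrite /gauss_mixed_det gauss_r0 mulr1 subr0; apply: gauss_nonneg.
rewrite gauss_mixed_detS; apply: Xn_nonnegD; first exact: det_pos.
by apply: Xn_nonnegMXn (IHj (ltnW le_jc)); rewrite addSn ltnS leq_addl.
Qed.

Lemma gauss_det_pos_succ c j : (j <= c)%N -> Xn_nonneg j (gauss_det r.+1 c j).
Proof.
elim: c j => [|c IHc] j.
  rewrite leqn0 => /eqP ->; apply: Xn_nonneg0.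
  by rewrite /gauss_det gauss_r0 mulr1 subr0; apply: coef_nonneg1.
rewrite leq_eqVlt => /orP[/eqP ->|lt_jc].
  by rewrite gauss_detSS gauss_det_succ mulr0 addr0; apply: gauss_mixed_det_pos.
rewrite gauss_detSS; apply: Xn_nonnegD; first exact: gauss_mixed_det_pos (ltnW _).
exact: Xn_nonnegMXn (leq_addl _ _) (IHc _ lt_jc).
Qed.

End DetStep.

Lemma gauss_det_pos r c j : (j <= c)%N -> Xn_nonneg j (gauss_det r c j).
Proof.
elim: r c j => [|r IHr] c j; last exact: gauss_det_pos_succ.
case: j => [|j] _; rewrite /gauss_det !gauss0k.
  by apply: Xn_nonneg0; rewrite mulr1 subr0; apply: coef_nonneg1.
by exists 0; rewrite ?mulr0 ?subrr // => i; rewrite coef0.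
Qed.

Definition qfact (k : nat) : {fraction {poly int}} := \prod_(i < k) (1 - qvar ^+ i.+1).

Lemma qfactS k : qfact k.+1 = qfact k * (1 - qvar ^+ k.+1).
Proof. by rewrite /qfact big_ord_recr. Qed.

Lemma qfactD a k : qfact (a + k) = qfact a * \prod_(i < k) (1 - qvar ^+ (a + i.+1)).
Proof.
elim: k => [|k IHk]; first by rewrite addn0 big_ord0 mulr1.
by rewrite addnS qfactS IHk big_ord_recr mulrA addnS.
Qed.

Lemma qvar_neq0 : qvar != 0.
Proof. by rewrite tofrac_eq0 polyX_eq0. Qed.

Lemma one_sub_qvarXn_neq0 k : 1 - qvar ^+ k.+1 != 0.
Proof.
rewrite /qvar -tofracXn -tofrac1 -tofracB tofrac_eq0 subr_eq0.
by apply/eqP => /(congr1 (coefp k.+1)); rewrite /= coef1 coefXn eqxx.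
Qed.

Lemma qfact_neq0 k : qfact k != 0.
Proof.
by rewrite /qfact prodf_seq_neq0; apply/allP => i _; apply: one_sub_qvarXn_neq0.
Qed.

Lemma gauss_qfactM r k : (gauss r k)%:F * (qfact r * qfact k) = qfact (r + k).
Proof.
elim: r k => [|r IHr] k; first by rewrite gauss0k tofrac1 /qfact big_ord0 !mul1r.
elim: k => [|k IHk].
  by rewrite gauss_r0 tofrac1 addn0 /qfact big_ord0 mulr1 mul1r.
transitivity ((gauss r k.+1)%:F * (qfact r * qfact k.+1) * (1 - qvar ^+ r.+1)
    + qvar ^+ r.+1 * (1 - qvar ^+ k.+1) * ((gauss r.+1 k)%:F * (qfact r.+1 * qfact k))).
  by rewrite gaussSS tofracD tofracM tofracXn !qfactS; ring.
rewrite IHr IHk addSnnS addSn [in RHS]qfactS -addSn exprD.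
ring.
Qed.

Lemma gauss_qfact r k : (gauss r k)%:F = qfact (r + k) / (qfact r * qfact k).
Proof. by rewrite -gauss_qfactM mulfK // mulf_neq0 ?qfact_neq0. Qed.

Lemma qbin_qfact n k : (k <= n)%N -> qbin n k = qfact n / (qfact k * qfact (n - k)).
Proof.
move=> le_kn; rewrite /qbin le_kn prodf_div.
rewrite -[in qfact n](subnK le_kn) qfactD -/(qfact k).
by rewrite [qfact k * _]mulrC -mulf_div divff ?mul1r ?qfact_neq0.
Qed.

Lemma qbin_gauss r k : qbin (r + k) k = (gauss r k)%:F.
Proof. by rewrite qbin_qfact ?leq_addl // gauss_qfact addnK [qfact k * _]mulrC. Qed.

Lemma gauss_det_diagM r c :
  (gauss_det r.+1 c c)%:F * (qfact c * qfact c.+1 * qfact r * qfact r.+1)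
  = qvar ^+ c * (1 - qvar) * qfact (r + c) * qfact (r + c).+1.
Proof.
case: c => [|c].
  by rewrite /gauss_det gauss_r0 mulr1 subr0 tofrac1 addn0 qfactS /qfact big_ord0; ring.
apply: (mulIf (one_sub_qvarXn_neq0 r)).
transitivity (((gauss r.+1 c.+1)%:F * (qfact r.+1 * qfact c.+1))
                * ((gauss r.+1 c.+1)%:F * (qfact r.+1 * qfact c.+1)) * (1 - qvar ^+ c.+2)
              - ((gauss r.+1 c.+2)%:F * (qfact r.+1 * qfact c.+2))
                * ((gauss r.+1 c)%:F * (qfact r.+1 * qfact c)) * (1 - qvar ^+ c.+1)).
  by rewrite /gauss_det tofracB !tofracM !qfactS; ring.
rewrite !gauss_qfactM !addSn !addnS !qfactS !exprS exprD.
ring.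
Qed.

Lemma gauss_det_diag_identity r c : (c <= r)%N ->
  gauss_det r.+1 c c * gauss (r - c) (r + c).+2 * (1 - 'X^((r + c).+2))
  = 'X^c * (1 - 'X) * gauss r c * gauss (r - c) c.+1 * gauss r.+1 r.+1.
Proof.
move=> le_cr; apply/eqP; rewrite -tofrac_eq; apply/eqP.
have M_neq0 : qfact c * qfact c.+1 * qfact r * qfact r.+1
              * (qfact (r - c) * qfact (r + c).+2) * qfact r.+1 != 0.
  by rewrite !mulf_neq0 ?qfact_neq0.
move: (gauss_det r.+1 c c) (gauss_det_diagM r c) => D detM.
apply: (mulIf M_neq0); rewrite !(tofracXn, tofracM, tofracB, tofrac1) -/qvar.
transitivity (D%:F * (qfact c * qfact c.+1 * qfact r * qfact r.+1)
   * ((gauss (r - c) (r + c).+2)%:F * (qfact (r - c) * qfact (r + c).+2))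
   * (1 - qvar ^+ (r + c).+2) * qfact r.+1); first by ring.
rewrite detM gauss_qfactM.
transitivity (qvar ^+ c * (1 - qvar) * ((gauss r c)%:F * (qfact r * qfact c))
   * ((gauss (r - c) c.+1)%:F * (qfact (r - c) * qfact c.+1))
   * ((gauss r.+1 r.+1)%:F * (qfact r.+1 * qfact r.+1)) * qfact (r + c).+2); last by ring.
rewrite !gauss_qfactM (addnS (r - c) c) subnK //.
rewrite (_ : (r - c + (r + c).+2 = r.+1 + r.+1)%N); last lia.
rewrite [qfact (r + c).+2]qfactS.
ring.
Qed.

Theorem theorem3 (m n : nat) : (0 < m)%N -> (0 < n)%N ->
  exists p : {poly int},
    (forall i : nat, 0 <= p`_i) /\
    FracField.tofrac p = (1 - qvar) / (1 - qvar ^+ (m + n)) * qbin (m + n - 2) (m - 1)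
           * qbin n m * qbin (2 * n) n.
Proof.
move=> m_gt0 n_gt0; have [le_mn | lt_nm] := leqP m n; last first.
  exists 0; split; first by move=> i; rewrite coef0.
  by rewrite tofrac0 [qbin n m]/qbin leqNgt lt_nm mulr0 mul0r.
case: m m_gt0 le_mn => // c _; case: n n_gt0 => // r _; rewrite ltnS => le_cr.
have [s s_ge0 det_eq] := gauss_det_pos r.+1 c c (leqnn c).
exists (s * gauss (r - c) (r + c).+2); split.
  exact: coef_nonnegM s_ge0 (gauss_nonneg _ _).
have -> : qbin (c.+1 + r.+1 - 2) (c.+1 - 1) = (gauss r c)%:F.
  by rewrite -qbin_gauss; congr qbin; lia.
have -> : qbin r.+1 c.+1 = (gauss (r - c) c.+1)%:F by rewrite -qbin_gauss; congr qbin; lia.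
have -> : qbin (2 * r.+1) r.+1 = (gauss r.+1 r.+1)%:F by rewrite -qbin_gauss; congr qbin; lia.
rewrite (_ : c.+1 + r.+1 = (r + c).+2)%N; last lia.
have := congr1 (@tofrac _) (@gauss_det_diag_identity r c le_cr).
rewrite det_eq !(tofracXn, tofracM, tofracB, tofrac1) -/qvar => identity.
have N_neq0 := one_sub_qvarXn_neq0 (r + c).+1.
apply: (mulfI (expf_neq0 c qvar_neq0)); apply: (mulIf N_neq0).
rewrite mulrA identity.
transitivity (qvar ^+ c * (1 - qvar) * (gauss r c)%:F * (gauss (r - c) c.+1)%:F
  * (gauss r.+1 r.+1)%:F * ((1 - qvar ^+ (r + c).+2)^-1 * (1 - qvar ^+ (r + c).+2))).
  by rewrite mulVf // mulr1.
by ring.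
Qed.
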